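(* Fix $\alpha,m,\tau,k,\gamma>0$ and define for $\lambda>0$ $$\varphi(\lambda)=\frac{\alpha}{2m}\cdot\frac{1}{1+\dfrac{\gamma\tau\lambda+k}{\gamma\lambda(\gamma\tau\lambda+k)+k^2m\lambda}},$$ so that $\|H_{\mathrm{DAPI}}\|_2^2=\sum_{n=2}^N\varphi(\lambda_n)$ where $\lambda_2,\dots,\lambda_N$ are the nonzero eigenvalues of $L_B$. Then $\varphi$ is strictly increasing on $(0,\infty)$. Consequently, if $\mathcal G,\mathcal G'$ are connected graphs on $N$ nodes whose weighted Laplacians have ordered eigenvalues satisfying $\lambda_n\le\lambda_n'$ for all $n$, then $\|H_{\mathrm{DAPI}}\|_2^2$ for $\mathcal G$ is at most that for $\mathcal G'$, whereas $\|H_{\mathrm{std}}\|_2^2=\frac{\alpha}{2m}(N-1)$ does not depend on the graph.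
   Context: $H_{\mathrm{std}}$ and $H_{\mathrm{DAPI}}$ are the linear systems: $H_{\mathrm{std}}$: $\dot\theta=\omega$, $\dot\omega=-\tfrac m\tau L_B\theta-\tfrac1\tau\omega+\tfrac1\tau w$, $y=L_G^{1/2}\theta$; $H_{\mathrm{DAPI}}$: $\dot\theta=\omega$, $\dot\omega=-\tfrac m\tau L_B\theta-\tfrac1\tau\omega+\tfrac1\tau\Omega+\tfrac1\tau w$, $\dot\Omega=-\tfrac1k\omega-\tfrac1k\gamma L_B\Omega$, $y=L_G^{1/2}\theta$, with $L_B$ the weighted Laplacian of a connected graph with positive edge weights and $L_G=\alpha L_B$. $\|H\|_2^2:=\int_0^\infty\operatorname{tr}(Ce^{At}BB^Te^{A^Tt}C^T)\,dt$. *)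

From Stdlib Require Import Reals Lra Lia.
Open Scope R_scope.

Definition phi (alpha m tau k gamma lam : R) : R :=
  (alpha / (2 * m)) *
  / (1 + (gamma * tau * lam + k) /
         (gamma * lam * (gamma * tau * lam + k) + k ^ 2 * m * lam)).

(* ||H_DAPI||_2^2 = sum_{n=2}^N phi(lambda_n), lam indexed by n = 1..N. *)
Definition h2_dapi_sq (alpha m tau k gamma : R) (N : nat) (lam : nat -> R) : R :=
  sum_f 2 N (fun n => phi alpha m tau k gamma (lam n)).

Definition phi_std (alpha m : R) (lam : R) : R := alpha / (2 * m).

Definition h2_std_sq (alpha m : R) (N : nat) (lam : nat -> R) : R :=
  sum_f 2 N (fun n => phi_std alpha m (lam n)).

Definition connected_laplacian_spectrum (N : nat) (lam : nat -> R) : Prop :=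
  lam 1%nat = 0 /\
  (forall n, (2 <= n <= N)%nat -> 0 < lam n) /\
  (forall n, (1 <= n)%nat -> (n < N)%nat -> lam n <= lam (S n)).

(* Dividing numerator and denominator of the inner fraction of [phi] by
   [gamma tau lam + k] shows that it is [1 / phi_denom lam], where
   [phi_denom lam = gamma lam + k^2 m lam / (gamma tau lam + k)].  Both
   summands increase strictly with [lam], and [alpha/(2m) / (1 + 1/D)]
   increases with [D]. *)

From Stdlib Require Import Reals Lra Lia.
Open Scope R_scope.

Lemma Rdiv_affine_lt (a k x y : R) :
  0 <= a -> 0 < k -> 0 <= x -> x < y -> x / (a * x + k) < y / (a * y + k).
Proof.
  intros Ha Hk Hx Hxy.
  assert (Dx : 0 < a * x + k) by nra.
  assert (Dy : 0 < a * y + k) by nra.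
  apply (Rmult_lt_reg_r ((a * x + k) * (a * y + k))); [nra|].
  field_simplify; [nra | lra | lra].
Qed.

Lemma Rinv_1_plus_inv_lt (x y : R) :
  0 < x -> x < y -> / (1 + / x) < / (1 + / y).
Proof.
  intros Hx Hxy.
  assert (Hinv : / y < / x) by (apply Rinv_0_lt_contravar; lra).
  assert (0 < / y) by (apply Rinv_0_lt_compat; lra).
  apply Rinv_lt_contravar; nra.
Qed.

Section PerModeContribution.

Variables alpha m tau k gamma : R.
Hypotheses (Ha : 0 < alpha) (Hm : 0 < m) (Ht : 0 < tau) (Hk : 0 < k)
  (Hg : 0 < gamma).

Definition phi_denom (lam : R) : R :=
  gamma * lam + k ^ 2 * m * lam / (gamma * tau * lam + k).

Lemma gamma_tau_pos : 0 < gamma * tau.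
Proof. apply Rmult_lt_0_compat; assumption. Qed.

Lemma affine_denom_pos (lam : R) : 0 <= lam -> 0 < gamma * tau * lam + k.
Proof. intro Hl; pose proof gamma_tau_pos; nra. Qed.

Lemma k2m_pos : 0 < k ^ 2 * m.
Proof. apply Rmult_lt_0_compat; [apply pow_lt|]; assumption. Qed.

Lemma phi_denom_pos (lam : R) : 0 < lam -> 0 < phi_denom lam.
Proof.
  intro Hl; unfold phi_denom.
  pose proof (affine_denom_pos lam ltac:(lra)).
  assert (0 < k ^ 2 * m * lam) by (apply Rmult_lt_0_compat; [apply k2m_pos | lra]).
  assert (0 < k ^ 2 * m * lam / (gamma * tau * lam + k))
    by (apply Rdiv_lt_0_compat; assumption).
  nra.
Qed.

Lemma phi_denom_lt (x y : R) : 0 < x -> x < y -> phi_denom x < phi_denom y.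
Proof.
  intros Hx Hxy; unfold phi_denom.
  assert (Hfrac : x / (gamma * tau * x + k) < y / (gamma * tau * y + k)).
  { apply Rdiv_affine_lt; [left; apply gamma_tau_pos | | |]; lra. }
  pose proof k2m_pos.
  unfold Rdiv in *; nra.
Qed.

Lemma phiE (lam : R) :
  0 < lam -> phi alpha m tau k gamma lam = alpha / (2 * m) * / (1 + / phi_denom lam).
Proof.
  intro Hl; unfold phi, phi_denom.
  pose proof (affine_denom_pos lam ltac:(lra)).
  assert (0 < k ^ 2 * m * lam) by (apply Rmult_lt_0_compat; [apply k2m_pos | lra]).
  assert (0 < gamma * lam * (gamma * tau * lam + k)) by
    (apply Rmult_lt_0_compat; [apply Rmult_lt_0_compat|]; lra).
  do 3 f_equal; field; split; lra.
Qed.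

Lemma phi_lt (x y : R) :
  0 < x -> x < y -> phi alpha m tau k gamma x < phi alpha m tau k gamma y.
Proof.
  intros Hx Hxy.
  rewrite (phiE x Hx), (phiE y ltac:(lra)).
  apply Rmult_lt_compat_l; [apply Rdiv_lt_0_compat; lra|].
  apply Rinv_1_plus_inv_lt; [apply phi_denom_pos | apply phi_denom_lt]; assumption.
Qed.

Lemma phi_le (x y : R) :
  0 < x -> x <= y -> phi alpha m tau k gamma x <= phi alpha m tau k gamma y.
Proof.
  intros Hx [Hxy | <-]; [left; apply phi_lt |]; lra.
Qed.

End PerModeContribution.

Lemma sum_f_le (s n : nat) (f g : nat -> R) :
  (s <= n)%nat -> (forall i, (s <= i <= n)%nat -> f i <= g i) ->
  sum_f s n f <= sum_f s n g.
Proof.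
  intros Hsn Hfg; apply sum_Rle; intros i Hi; apply Hfg; lia.
Qed.

Lemma sum_f_const (s n : nat) (c : R) :
  sum_f s n (fun _ => c) = c * INR (S (n - s)).
Proof. unfold sum_f; apply sum_cte. Qed.

Theorem mainTheorem3 (alpha m tau k gamma : R)
  (Ha : 0 < alpha) (Hm : 0 < m) (Ht : 0 < tau) (Hk : 0 < k) (Hg : 0 < gamma) :
  (forall x y, 0 < x -> x < y ->
     phi alpha m tau k gamma x < phi alpha m tau k gamma y) /\
  (forall (N : nat) (lam lam' : nat -> R), (2 <= N)%nat ->
     connected_laplacian_spectrum N lam ->
     connected_laplacian_spectrum N lam' ->
     (forall n, (1 <= n <= N)%nat -> lam n <= lam' n) ->
     h2_dapi_sq alpha m tau k gamma N lam <= h2_dapi_sq alpha m tau k gamma N lam' /\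
     h2_std_sq alpha m N lam = alpha / (2 * m) * INR (N - 1) /\
     h2_std_sq alpha m N lam' = alpha / (2 * m) * INR (N - 1)).
Proof.
  split; [exact (phi_lt alpha m tau k gamma Ha Hm Ht Hk Hg)|].
  intros N lam lam' HN [_ [Hpos _]] _ Hle.
  assert (Hstd : forall l, h2_std_sq alpha m N l = alpha / (2 * m) * INR (N - 1)).
  { intro l; unfold h2_std_sq, phi_std; rewrite sum_f_const.
    do 2 f_equal; lia. }
  split; [|split; apply Hstd].
  apply sum_f_le; [exact HN|]; intros n Hn.
  apply phi_le; auto; apply Hle; lia.
Qed.
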